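(* There is an absolute constant $c>0$ such that for every sum-bucket game on a simple graph with $n\ge2$ nodes whose strategy paths are all simple, and every optimal routing $\mathbf p^*$ with $\overline C^*=\overline C(\mathbf p^* )$, $\overline D^*=\overline D(\mathbf p^* )$, the price of anarchy satisfies $$PoA\le c\cdot\frac{\overline C^*\cdot\overline D^*}{\overline C^*+\overline D^*}\cdot\lg^2 n.$$
   Context: A routing game $(\mathbf N,G,\mathcal P)$: players $\{1,\dots,N\}$ ($N\ge1$), a simple graph $G$ with $n$ nodes, and for each player $i$ a nonempty finite set $\mathcal P_i$ of simple paths (each with at least one edge) from $u_i$ to $v_i$; $\mathcal P=\bigcup_i\mathcal P_i$, $L=\max_{p\in\mathcal P}|p|$ (number of edges). A routing is $\mathbf p=[p_1,\dots,p_N]$, $p_i\in\mathcal P_i$. Sum-bucket game: for $k=0,\dots,\lceil\lg L\rceil$ bucket $B_k$ = paths in $\mathcal P$ with length in $[2^k,2^{k+1})$, $B(q)$ = bucket index of $q$; normalized length $\overline D_q=2^{B(q)+1}-1$; $\overline C_{e,q}(\mathbf p)$ = number of players $j$ with $e\in p_j$ and $B(p_j)=B(q)$; $\overline C_q(\mathbf p)=\max_{e\in q}\overline C_{e,q}(\mathbf p)$; $\overline C_i=\overline C_{p_i}$, $\overline D_i=\overline D_{p_i}$; player cost $pc_i=\overline C_i+\overline D_i$; $\overline C(\mathbf p)=\max_i\overline C_i$, $\overline D(\mathbf p)=\max_i\overline D_i$; social cost $SC(\mathbf p)=\overline C(\mathbf p)+\overline D(\mathbf p)$. A Nash-routing: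 no player can strictly lower its cost by unilaterally changing its path within $\mathcal P_i$; an optimal routing minimizes $SC$, with value $SC^*$. $PoA=\sup_{\mathbf p}SC(\mathbf p)/SC^*$ over all Nash-routings $\mathbf p$ (which exist). $\lg=\log_2$. *)

From mathcomp Require Import all_boot.
Set Implicit Arguments. Unset Strict Implicit. Unset Printing Implicit Defensive.

Section RoutingGame.
Variables (n N : nat).

Definition pth := seq 'I_n.

Definition plen (q : pth) : nat := (size q).-1.

Definition pedges (q : pth) : seq ('I_n * 'I_n) := zip q (behead q).

Definition edge_in (e : 'I_n * 'I_n) (q : pth) : bool :=
  (e \in pedges q) || ((e.2, e.1) \in pedges q).

Definition simple_path (G : rel 'I_n) (u v : 'I_n) (q : pth) : bool :=
  [&& 1 < size q, uniq q, path G (head u q) (behead q),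
      head u q == u & last u q == v].

Definition simple_graph (G : rel 'I_n) : Prop := symmetric G /\ irreflexive G.

Definition bucket (q : pth) : nat := trunc_log 2 (plen q).

Definition Dbar (q : pth) : nat := 2 ^ (bucket q).+1 - 1.

Definition Cbar_e (p : 'I_N -> pth) (e : 'I_n * 'I_n) (q : pth) : nat :=
  #|[pred j : 'I_N | edge_in e (p j) && (bucket (p j) == bucket q)]|.

Definition Cbar (p : 'I_N -> pth) (q : pth) : nat :=
  \max_(e <- pedges q) Cbar_e p e q.

Definition pc (p : 'I_N -> pth) (i : 'I_N) : nat := Cbar p (p i) + Dbar (p i).

Definition Cmax (p : 'I_N -> pth) : nat := \max_(i < N) Cbar p (p i).
Definition Dmax (p : 'I_N -> pth) : nat := \max_(i < N) Dbar (p i).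
Definition SC (p : 'I_N -> pth) : nat := Cmax p + Dmax p.

Definition upd (p : 'I_N -> pth) (i : 'I_N) (q : pth) : 'I_N -> pth :=
  fun j => if j == i then q else p j.

Definition routing (P : 'I_N -> seq pth) (p : 'I_N -> pth) : Prop :=
  forall i, p i \in P i.

Definition nash (P : 'I_N -> seq pth) (p : 'I_N -> pth) : Prop :=
  routing P p /\
  forall i q, q \in P i -> pc p i <= pc (upd p i q) i.

Definition optimal (P : 'I_N -> seq pth) (p : 'I_N -> pth) : Prop :=
  routing P p /\ forall p', routing P p' -> SC p <= SC p'.

Definition valid_game (G : rel 'I_n) (u v : 'I_N -> 'I_n) (P : 'I_N -> seq pth)
  : Prop :=
  simple_graph G /\
  forall i, P i != [::] /\ forall q, q \in P i -> simple_path G (u i) (v i) q.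

End RoutingGame.

From mathcomp Require Import all_boot zify.
From Stdlib Require Import Reals Lra Psatz.
(* Reals shadows the nat notation [m ^ n]; re-import ssrnat so that it means expn. *)
Import ssrnat.
Set Implicit Arguments. Unset Strict Implicit.

(* Think of a "slot" as a pair (edge, bucket index); the load of a slot is the
   number of players whose path uses that edge and lies in that bucket, and a
   player's congestion Cbar is the largest load along its path.  Let p be a
   Nash routing, pstar an optimal one, M the largest slot load under p and
   L = Dmax pstar.  Deviating to pstar j costs at most M + 1 + L, so
   (1) every player pays at most M + 1 + L, hence congested players have
       short paths and touch few slots;
   (2) a player touching a slot of load >= t would, when deviating, meet a
       slot of pstar j with load >= t - (L + 1).
   Double counting player/slot incidences gives the recurrence
     t * #{load >= t} <= 2 (M + L + 1 - t) * Cmax pstar * #{load >= t - (L+1)},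
   so the number of heavy slots doubles every L + 1 steps below M; as there
   are at most n^3 slots, M = O(lg n * L * Cmax pstar).  Since SC p <= 2M+L+1
   this yields SC p <= 122 lg n * Cmax pstar * Dmax pstar, and dividing by
   SC pstar = Cmax pstar + Dmax pstar gives the theorem with c = 122. *)

Lemma card_indicator (T : finType) (A : pred T) : #|A| = \sum_x (A x : nat).
Proof.
by rewrite -sum1_card big_mkcond; apply: eq_bigr => x _ /=; rewrite -topredE /=; case: (A x).
Qed.

Lemma sum_mem_le (T : finType) (s : seq T) : \sum_x (x \in s : nat) <= size s.
Proof. by rewrite -card_indicator; exact: card_size. Qed.

Lemma bigmax_seq_attained (I : eqType) (r : seq I) (F : I -> nat) :
  r != [::] -> exists2 i, i \in r & \max_(j <- r) F j = F i.
Proof.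
elim: r => // a [|b r] IH _; first by exists a; rewrite ?big_seq1 ?inE.
rewrite big_cons; have [i ir ->] := IH isT.
case: (leqP (F i) (F a)) => _; first by exists a; rewrite ?inE ?eqxx.
by exists i; rewrite // inE ir orbT.
Qed.

Section Paths.
Variable n : nat.
Implicit Types (q : pth n) (e : 'I_n * 'I_n).

Lemma size_pedges q : size (pedges q) = plen q.
Proof. by rewrite /pedges size_zip size_behead /plen; apply/minn_idPr; exact: leq_pred. Qed.

Lemma edge_in_swap e q : edge_in (e.2, e.1) q = edge_in e q.
Proof. by case: e => a b; rewrite /edge_in /= orbC. Qed.

(* A path traverses at most 2|q| ordered edges (each edge in both directions). *)
Lemma edge_in_count q : \sum_e (edge_in e q : nat) <= 2 * plen q.
Proof.
pose sw e : 'I_n * 'I_n := (e.2, e.1).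
have swK : involutive sw by case.
apply: (@leq_trans (\sum_e ((e \in pedges q) + (e \in map sw (pedges q)) : nat))).
  apply: leq_sum => e _.
  rewrite /edge_in -[(e.2, e.1)]/(sw e) -(mem_map (inv_inj swK) (pedges q) (sw e)) swK.
  by case: (e \in _); case: (_ \in _).
rewrite big_split /= mul2n -addnn -size_pedges; apply: leq_add; first exact: sum_mem_le.
by rewrite -(size_map sw); exact: sum_mem_le.
Qed.

Lemma plen_le_Dbar q : plen q <= Dbar q.
Proof. by have := trunc_log_ltn (plen q) (isT : 1 < 2); rewrite /Dbar /bucket; lia. Qed.

Lemma Dbar_gt0 q : 0 < Dbar q.
Proof. by rewrite /Dbar expnS; have := expn_gt0 2 (bucket q); lia. Qed.

Lemma simple_path_plen G u v q : simple_path G u v q -> 0 < plen q < n.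
Proof.
case/and5P => size_q uniq_q _ _ _.
have : size q <= n.
  by rewrite -(card_uniqP uniq_q); apply: leq_trans (max_card _) _; rewrite card_ord.
by rewrite /plen; lia.
Qed.

Lemma bucket_le_plen q : bucket q <= plen q.
Proof.
rewrite /bucket; case: (posnP (plen q)) => [->|pos]; first by rewrite trunc_log0.
have := trunc_logP (isT : 1 < 2) pos.
by have := ltn_expl (trunc_log 2 (plen q)) (isT : 1 < 2); lia.
Qed.

Lemma simple_path_bucket G u v q : simple_path G u v q -> bucket q < n.
Proof. by move/simple_path_plen; have := bucket_le_plen q; lia. Qed.

End Paths.

(* A slot is an (ordered) edge together with a bucket index; two players
   interfere exactly when their paths share a slot.  The congestion Cbar of a
   path is the largest load of one of its slots. *)
Definition slot (n : nat) := (('I_n * 'I_n) * 'I_n)%type.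

Section Congestion.
Variables n N : nat.
Implicit Types (r : 'I_N -> pth n) (q : pth n) (x : slot n).

Definition uses r x (j : 'I_N) : bool := edge_in x.1 (r j) && (bucket (r j) == x.2).

Definition load r x : nat := #|[pred j | uses r x j]|.

Definition max_load r : nat := \max_(x : slot n) load r x.

Definition heavy r (t : nat) : pred (slot n) := [pred x | t <= load r x].

Lemma Cbar_e_load r e q (bq : bucket q < n) : Cbar_e r e q = load r (e, Ordinal bq).
Proof. by []. Qed.

Lemma Cbar_e_le_Cbar r e q : edge_in e q -> Cbar_e r e q <= Cbar r q.
Proof.
have Cbar_e_swap : Cbar_e r (e.2, e.1) q = Cbar_e r e q.
  by apply: eq_card => j; rewrite !inE edge_in_swap.
case/orP => [e_q|e_q]; last rewrite -Cbar_e_swap.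
all: exact: (leq_bigmax_seq (F := fun e => Cbar_e r e q) _ e_q isT).
Qed.

Lemma load_le_Cbar r x j : uses r x j -> load r x <= Cbar r (r j).
Proof.
case/andP => x_j /eqP bj.
have -> : load r x = Cbar_e r x.1 (r j) by rewrite /Cbar_e bj.
exact: Cbar_e_le_Cbar.
Qed.

Lemma load_le_Cmax r x : load r x <= Cmax r.
Proof.
case: (pickP [pred j | uses r x j]) => [j x_j|no_user]; last by rewrite /load eq_card0.
apply: leq_trans (load_le_Cbar x_j) _.
exact: (leq_bigmax (F := fun i => Cbar r (r i))).
Qed.

Lemma Cbar_le_max_load r q : bucket q < n -> Cbar r q <= max_load r.
Proof.
move=> bq; apply/bigmax_leqP_seq => e _ _; rewrite (Cbar_e_load r e bq).
exact: (leq_bigmax (F := load r)).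
Qed.

Lemma Cbar_e_upd r i q e q' : Cbar_e (upd r i q) e q' <= Cbar_e r e q' + 1.
Proof.
rewrite /Cbar_e (cardD1 i) addnC; apply: leq_add; last exact: leq_b1.
apply: subset_leq_card; apply/subsetP => j; rewrite !inE /upd.
by case/andP => /negbTE ->.
Qed.

Lemma Cbar_upd_le r i q : bucket q < n -> Cbar (upd r i q) q <= max_load r + 1.
Proof.
move=> bq; apply/bigmax_leqP_seq => e _ _; apply: leq_trans (Cbar_e_upd r i q e q) _.
by rewrite leq_add2r (Cbar_e_load r e bq); exact: (leq_bigmax (F := load r)).
Qed.

Lemma sum_eq_ord_le1 (m B : nat) : \sum_(k < m) (B == k : nat) <= 1.
Proof.
case: (ltnP B m) => [Bm|mB]; last first.
  by rewrite big1 // => k _; have := ltn_ord k; case: eqP => // Bk; lia.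
rewrite (bigD1 (Ordinal Bm)) //= eqxx big1 // => k k_ne.
by case: eqP => // Bk; rewrite -(inj_eq val_inj) /= -Bk eqxx in k_ne.
Qed.

Lemma uses_count r j : \sum_x (uses r x j : nat) <= 2 * plen (r j).
Proof.
apply: leq_trans (edge_in_count (r j)).
rewrite -(pair_bigA _ (fun e (k : 'I_n) => uses r (e, k) j : nat)) /=.
apply: leq_sum => e _; rewrite /uses /=.
by case: (edge_in e (r j)) => /=; [exact: sum_eq_ord_le1 | rewrite big1].
Qed.

Lemma sum_load r (A : pred (slot n)) :
  \sum_(x in A) load r x = \sum_j #|[pred x in A | uses r x j]|.
Proof.
under eq_bigr => x _ do rewrite /load card_indicator.
rewrite exchange_big; apply: eq_bigr => j _; rewrite card_indicator big_mkcond.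
by apply: eq_bigr => x _ /=; case: (x \in A).
Qed.

End Congestion.

(* Comparing each player's cost
   with its deviation to pstar shows that few slots can be heavily loaded. *)
Section LoadRecurrence.
Variables n N : nat.
Variables p pstar : 'I_N -> pth n.
Hypothesis bucket_pstar : forall j, bucket (pstar j) < n.
Hypothesis plen_pstar : forall j, 0 < plen (pstar j).
Hypothesis nash_pstar : forall j, pc p j <= pc (upd p j (pstar j)) j.

Local Notation M := (max_load p).
Local Notation L := (Dmax pstar).

Lemma deviation_cost j :
  pc (upd p j (pstar j)) j <= Cbar (upd p j (pstar j)) (pstar j) + L.
Proof.
rewrite /pc /upd eqxx leq_add2l.
exact: (leq_bigmax (F := fun i => Dbar (pstar i))).
Qed.

Lemma nash_cost_le j : pc p j <= M + 1 + L.
Proof.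
apply: leq_trans (nash_pstar j) (leq_trans (deviation_cost j) _).
by rewrite leq_add2r Cbar_upd_le.
Qed.

Lemma congested_short j t : t <= Cbar p (p j) -> plen (p j) <= M + 1 + L - t.
Proof. by have := nash_cost_le j; have := plen_le_Dbar (p j); rewrite /pc; lia. Qed.

Lemma congested_deviates j t :
  t <= Cbar p (p j) -> exists x, (x \in heavy p (t - (L + 1))) && uses pstar x j.
Proof.
move=> t_le.
have t_dev : t <= Cbar (upd p j (pstar j)) (pstar j) + L.
  by apply: leq_trans (leq_trans (nash_pstar j) (deviation_cost j)); rewrite /pc; lia.
have pedges_nil : pedges (pstar j) != [::].
  by rewrite -size_eq0 size_pedges -lt0n plen_pstar.
have [e e_in Cbar_e_max] :=
  bigmax_seq_attained (fun e => Cbar_e (upd p j (pstar j)) e (pstar j)) pedges_nil.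
exists (e, Ordinal (bucket_pstar j)); apply/andP; split.
  rewrite inE -Cbar_e_load; have := Cbar_e_upd p j (pstar j) e (pstar j).
  by move: t_dev; rewrite /Cbar Cbar_e_max; lia.
by rewrite /uses /edge_in e_in eqxx.
Qed.

Lemma load_recurrence t :
  t * #|heavy p t| <= 2 * (M + (L + 1) - t) * (Cmax pstar * #|heavy p (t - (L + 1))|).
Proof.
set A := heavy p t; set A' := heavy p (t - (L + 1)); set K := 2 * (M + (L + 1) - t).
have heavy_users : t * #|A| <= \sum_j #|[pred x in A | uses p x j]|.
  rewrite -sum_load mulnC -sum_nat_const; apply: leq_sum => x.
  by rewrite inE.
have per_player j : #|[pred x in A | uses p x j]| <= K * #|[pred x in A' | uses pstar x j]|.
  case: (posnP #|[pred x in A | uses p x j]|) => [-> //|]; case/card_gt0P => x.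
  rewrite !inE => /andP [x_heavy x_j].
  have t_le : t <= Cbar p (p j) := leq_trans x_heavy (load_le_Cbar x_j).
  have [x' /andP [x'_heavy x'_j]] := congested_deviates t_le.
  have -> : #|[pred x in A' | uses pstar x j]| = (#|[pred x in A' | uses pstar x j]|.-1).+1.
    by rewrite prednK //; apply/card_gt0P; exists x'; rewrite inE x'_heavy.
  rewrite mulnS; apply: leq_trans (leq_addr _ _).
  apply: (@leq_trans #|[pred x | uses p x j]|).
    by apply: subset_leq_card; apply/subsetP => y; rewrite !inE => /andP [].
  rewrite card_indicator; apply: leq_trans (uses_count p j) _.
  by have := congested_short t_le; rewrite /K; lia.
apply: (leq_trans heavy_users).
apply: (@leq_trans (\sum_j K * #|[pred x in A' | uses pstar x j]|)).
  by apply: leq_sum => j _; exact: per_player.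
rewrite -big_distrr /= -sum_load leq_mul2l; apply/orP; right.
rewrite mulnC -sum_nat_const; apply: leq_sum => x _; exact: load_le_Cmax.
Qed.

End LoadRecurrence.

Lemma doubling (f : nat -> nat) (M a C S : nat) :
  0 < a -> 0 < C -> 5 * S * a * C <= M ->
  (forall t, t * f t <= 2 * (M + a - t) * (C * f (t - a))) ->
  forall s, s <= S -> 2 ^ s * f M <= f (M - s * a).
Proof.
move=> a_gt0 C_gt0 M_large rec; elim=> [_|s IH sS]; first by rewrite mul1n subn0.
have le1 : s * a <= S * a * C by rewrite -mulnA leq_mul ?(ltnW sS) ?leq_pmulr.
have le2 : s.+1 * a * C <= S * a * C by rewrite !leq_mul2r sS !orbT.
have [sa_le Y_le] : s * a <= M /\ 4 * (s.+1 * a * C) <= M - s * a by split; lia.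
have := rec (M - s * a); rewrite (_ : M + a - (M - s * a) = s.+1 * a); last by nia.
rewrite (_ : M - s * a - a = M - s.+1 * a); last by nia.
have := IH (ltnW sS); rewrite expnS; nia.
Qed.

Lemma doubling_bound (f : nat -> nat) (M a C S : nat) :
  0 < a -> 0 < C -> 0 < f M -> (forall t, f t < 2 ^ S) ->
  (forall t, t * f t <= 2 * (M + a - t) * (C * f (t - a))) ->
  M < 5 * S * a * C.
Proof.
move=> a_gt0 C_gt0 fM_gt0 f_lt rec; rewrite ltnNge; apply/negP => M_large.
have := doubling a_gt0 C_gt0 M_large rec (leqnn S); have := f_lt (M - S * a).
by have := expn_gt0 2 S; nia.
Qed.

(* Dmax is positive for any routing; Cmax is positive once some path has an
   edge, since that player alone loads its first slot. *)
Lemma Dmax_gt0 n N (r : 'I_N -> pth n) (j : 'I_N) : 0 < Dmax r.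
Proof. exact: leq_trans (Dbar_gt0 (r j)) (leq_bigmax (F := fun i => Dbar (r i)) j). Qed.

Lemma Cmax_gt0 n N (r : 'I_N -> pth n) (j : 'I_N) : 0 < plen (r j) -> 0 < Cmax r.
Proof.
rewrite -size_pedges; case E: (pedges (r j)) => [//|e s] _.
have e_j : edge_in e (r j) by rewrite /edge_in E inE eqxx.
have Cbar_le := leq_bigmax (F := fun i => Cbar r (r i)) j.
apply: leq_trans (leq_trans (Cbar_e_le_Cbar r e_j) Cbar_le).
by apply/card_gt0P; exists j; rewrite inE e_j eqxx.
Qed.

(* The maximum slot load of a Nash routing is O(lg n * Dmax pstar * Cmax pstar):
   apply the doubling bound to f t = #|heavy p t|, which is at most n^3. *)
Lemma max_load_bound n N (p pstar : 'I_N -> pth n) :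
  0 < n -> 0 < Cmax pstar ->
  (forall j, bucket (pstar j) < n) -> (forall j, 0 < plen (pstar j)) ->
  (forall j, pc p j <= pc (upd p j (pstar j)) j) ->
  max_load p < 5 * (3 * (trunc_log 2 n).+1) * (Dmax pstar + 1) * Cmax pstar.
Proof.
move=> n_gt0 C_gt0 bucket_pstar plen_pstar nash_pstar.
apply: (doubling_bound (f := fun t => #|heavy p t|)) => //; first by rewrite addn1.
- have slots_gt0 : 0 < #|{: slot n}| by rewrite !card_prod !card_ord !muln_gt0 n_gt0.
  have [x0 max_x0] := eq_bigmax (load p) slots_gt0.
  by apply/card_gt0P; exists x0; rewrite inE /max_load max_x0.
- move=> t; apply: leq_ltn_trans (max_card _) _; rewrite !card_prod !card_ord.
  have n_lt := trunc_log_ltn n (isT : 1 < 2).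
  have -> : 2 ^ (3 * (trunc_log 2 n).+1) =
            2 ^ (trunc_log 2 n).+1 * 2 ^ (trunc_log 2 n).+1 * 2 ^ (trunc_log 2 n).+1.
    by rewrite -!expnD; congr (2 ^ _); lia.
  by apply: ltn_mul => //; apply: ltn_mul.
- by move=> t; exact: (load_recurrence bucket_pstar plen_pstar nash_pstar).
Qed.

(* Social cost of a Nash routing: both components are controlled by the
   maximum slot load, whence SC p = O(lg n * Dmax pstar * Cmax pstar). *)
Lemma nash_social_cost_bound n N (p pstar : 'I_N -> pth n) :
  2 <= n -> 0 < Cmax pstar -> 0 < Dmax pstar ->
  (forall j, bucket (p j) < n) -> (forall j, bucket (pstar j) < n) ->
  (forall j, 0 < plen (pstar j)) ->
  (forall j, pc p j <= pc (upd p j (pstar j)) j) ->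
  SC p <= 122 * (trunc_log 2 n * Dmax pstar * Cmax pstar).
Proof.
move=> n_ge2 C_gt0 L_gt0 bucket_p bucket_pstar plen_pstar nash_pstar.
have M_lt := max_load_bound (ltnW n_ge2) C_gt0 bucket_pstar plen_pstar nash_pstar.
have Cp_le : Cmax p <= max_load p.
  by apply/bigmax_leqP => j _; exact: Cbar_le_max_load.
have Dp_le : Dmax p <= max_load p + 1 + Dmax pstar.
  apply/bigmax_leqP => j _; apply: leq_trans (nash_cost_le bucket_pstar nash_pstar j).
  exact: leq_addl.
have T_gt0 : 0 < trunc_log 2 n by apply: trunc_log_max.
move: M_lt Cp_le Dp_le T_gt0 C_gt0 L_gt0; rewrite /SC.
move: (max_load p) (Cmax p) (Dmax p) (trunc_log 2 n) (Dmax pstar) (Cmax pstar).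
move=> M Cp Dp T L C; nia.
Qed.

Lemma INR_expn (m k : nat) : INR (m ^ k) = (INR m ^ k)%R.
Proof. by elim: k => [|k IH] //; rewrite expnS mult_INR IH. Qed.

Lemma trunc_log2_le_lg n : 0 < n -> (INR (trunc_log 2 n) <= ln (INR n) / ln 2)%R.
Proof.
move=> n_gt0; have ln2_gt0 : (0 < ln 2)%R by rewrite -ln_1; apply: ln_increasing; lra.
have pow_le : (2 ^ trunc_log 2 n <= INR n)%R.
  rewrite -[2%R]/(INR 2) -INR_expn; apply/le_INR/leP.
  exact: trunc_logP.
apply: (Rmult_le_reg_r (ln 2)) => //; rewrite /Rdiv Rmult_assoc Rinv_l; last lra.
rewrite Rmult_1_r -ln_pow; last lra.
case: (Rle_lt_or_eq_dec _ _ pow_le) => [lt|->]; last exact: Rle_refl.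
by left; apply: ln_increasing => //; apply: pow_lt; lra.
Qed.

Lemma ratio_bound (S T L C : nat) (x : R) :
  0 < C -> 0 < L -> 0 < T -> (INR T <= x)%R -> S <= 122 * (T * L * C) ->
  (INR S / INR (C + L) <= 122 * (INR C * INR L / (INR C + INR L)) * x ^ 2)%R.
Proof.
have INR_ge1 k : 0 < k -> (1 <= INR k)%R by move/leP/le_INR.
move=> /INR_ge1 C_ge1 /INR_ge1 L_ge1 /INR_ge1 T_ge1 T_le /leP/le_INR S_le.
rewrite !mult_INR in S_le; rewrite plus_INR.
have -> : (122 * (INR C * INR L / (INR C + INR L)) * x ^ 2 =
           (122 * INR C * INR L * x ^ 2) / (INR C + INR L))%R by field; lra.
apply: Rmult_le_compat_r; first by left; apply: Rinv_0_lt_compat; lra.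
have x_sq : (INR T <= x ^ 2)%R by nra.
have LC_ge0 : (0 <= INR L * INR C)%R by nra.
have := Rmult_le_compat_r _ _ _ LC_ge0 x_sq.
have INR_122 : INR 122 = 122%R by rewrite /=; lra.
rewrite INR_122 in S_le; nra.
Qed.

Theorem mainTheorem15 :
  exists c : R, (0 < c)%R /\
  forall (n N : nat), 2 <= n -> 1 <= N ->
  forall (G : rel 'I_n) (u v : 'I_N -> 'I_n) (P : 'I_N -> seq (seq 'I_n)),
  valid_game G u v P ->
  forall pstar : 'I_N -> seq 'I_n, optimal P pstar ->
  forall p : 'I_N -> seq 'I_n, nash P p ->
  (INR (SC p) / INR (SC pstar) <=
     c * (INR (Cmax pstar) * INR (Dmax pstar) /
          (INR (Cmax pstar) + INR (Dmax pstar)))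
       * (ln (INR n) / ln 2) ^ 2)%R.
Proof.
exists 122%R; split; first lra.
move=> n N n_ge2 N_gt0 G u v P [_ valid] pstar [route_pstar _] p [route_p nash_p].
have simple_p j : simple_path G (u j) (v j) (p j) by exact: (valid j).2.
have simple_pstar j : simple_path G (u j) (v j) (pstar j) by exact: (valid j).2.
have plen_pstar j : 0 < plen (pstar j) by case/andP: (simple_path_plen (simple_pstar j)).
pose j0 : 'I_N := Ordinal N_gt0.
apply: (@ratio_bound _ (trunc_log 2 n)) (Cmax_gt0 (plen_pstar j0)) (Dmax_gt0 pstar j0) _ _ _.
- exact: trunc_log_max.
- by apply: trunc_log2_le_lg; lia.
apply: nash_social_cost_bound => //.
- exact: Cmax_gt0 (plen_pstar j0).
- exact: Dmax_gt0 pstar j0.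
- by move=> j; exact: simple_path_bucket (simple_p j).
- by move=> j; exact: simple_path_bucket (simple_pstar j).
- by move=> j; apply: nash_p; exact: route_pstar.
Qed.
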